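(* Let $G'$ be a context-free grammar with start symbol $s$, no $\varepsilon$-rules and no useless nonterminal, let $\ell$ be a prefix of $G'$, and let $\mathrm{Expl}(G_\ell)$ be its explanation graph (defined in the context). Then $\mathrm{Expl}(G_\ell)$ is linear.
   Context: Grammar: $G'$ has finite terminal set $\Sigma$, finite nonterminal set $N$, start symbol $s\in N$; every rule $A\to\alpha$ has $\alpha\in(N\cup\Sigma)^+$; no nonterminal is useless (each has a rule occurring in some derivation of a terminal string from $s$). A prefix is a nonempty string $\ell\in\Sigma^+$ that is an initial segment of some terminal string derivable from $s$. Explanation graph. For a prefix $\ell$ consider ground atoms $q(\ell)$, $p(\beta,u,v)$ with $\beta\in(N\cup\Sigma)^*$, $u,v\in\Sigma^*$, and switch atoms $m(A\to\alpha)$ for rules of $G'$. Consider all ground clauses: (C0) $q(\ell)\leftarrow p(s,\ell,\varepsilon)$; (C1) $p(\varepsilon,u,u)\leftarrow$ (empty body), for all $u$; (C2) for $a\in\Sigma$: $p(a\beta,a,\varepsilon)\leftarrow$ (empty body); and $p(a\beta,av,w)\leftarrow p(\beta,v,w)$ whenever $v\neq\varepsilon$; (C3) for $A\in N$ and each rule $A\to\alpha$: $p(A\beta,u,\varepsilon)\leftarrow m(A\to\alpha)\wedge p(\alpha,u,\varepsilon)$; and $p(A\beta,u,w)\leftarrow m(A\to\alpha)\wedge p(\alpha,u,v)\wedge p(\beta,v,w)$ whenever $v\neq\varepsilon$. A $p$- or $q$-atom is provable if it lies in the least Herbrand model of these clauses with all $m$-atoms taken as true. The defined goals of $\mathrm{Expl}(G_\ell)$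 form the smallest set containing $q(\ell)$ such that whenever $H$ is a defined goal and $H\leftarrow\alpha$ is one of the clauses above whose $p$-atoms are all provable, every $p$-atom of $\alpha$ is a defined goal. The defining formula of a defined goal $H$ is $H\Leftrightarrow\alpha_1\vee\dots\vee\alpha_M$, where the $\alpha_i$ are the bodies of all such clauses with head $H$ whose $p$-atoms are all provable. $H$ is a parent of $C$ if $C$ occurs in some $\alpha_i$; the ancestor relation is the transitive closure of the parent relation. Two defined goals $A,B$ are equivalent if $A=B$ or each is an ancestor of the other; the equivalence classes are called SCCs. A defining formula $H\Leftrightarrow\alpha_1\vee\dots\vee\alpha_M$ is linear if no $\alpha_i$ contains two (occurrences of) defined goals belonging to the same SCC; $\mathrm{Expl}(G_\ell)$ is linear if every defining formula in it is linear. *)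

From mathcomp Require Import all_boot.
From Stdlib Require Import List Relation_Operators.
Set Implicit Arguments. Unset Strict Implicit. Unset Printing Implicit Defensive.

Section Grammar.
Variables (Sigma Nt : finType).

Definition symb : Type := (Sigma + Nt)%type.
Definition term (a : Sigma) : symb := inl a.
Definition nterm (A : Nt) : symb := inr A.

Variable rules : list (Nt * list symb).

Definition step_with (A : Nt) (alpha : list symb) (x y : list symb) : Prop :=
  exists l r, x = l ++ nterm A :: r /\ y = l ++ alpha ++ r.

Definition step (x y : list symb) : Prop :=
  exists A alpha, List.In (A, alpha) rules /\ step_with A alpha x y.

Definition derives : list symb -> list symb -> Prop := clos_refl_trans _ step.

Definition no_eps_rules : Prop :=
  forall A alpha, List.In (A, alpha) rules -> alpha <> nil.

Definition no_useless (s : Nt) : Prop :=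
  forall A : Nt, exists alpha x y (w : list Sigma),
    List.In (A, alpha) rules /\
    derives [:: nterm s] x /\ step_with A alpha x y /\ derives y (map term w).

Definition is_prefix (s : Nt) (l : list Sigma) : Prop :=
  l <> nil /\ exists w : list Sigma, derives [:: nterm s] (map term (l ++ w)).

Inductive atom : Type :=
| Q of list Sigma
| P of list symb & list Sigma & list Sigma
| M of Nt & list symb.

Definition is_p (a : atom) : Prop := match a with P _ _ _ => True | _ => False end.

(* all ground clauses (C0)-(C3) for start symbol s and prefix l: head <- body *)
Variables (s : Nt) (l : list Sigma).

Inductive clause : atom -> list atom -> Prop :=
| C0 : clause (Q l) [:: P [:: nterm s] l nil]
| C1 u : clause (P nil u u) nil
| C2a a beta : clause (P (term a :: beta) [:: a] nil) nil
| C2b a beta v w : v <> nil ->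
    clause (P (term a :: beta) (a :: v) w) [:: P beta v w]
| C3a A alpha beta u : List.In (A, alpha) rules ->
    clause (P (nterm A :: beta) u nil) [:: M A alpha; P alpha u nil]
| C3b A alpha beta u v w : List.In (A, alpha) rules -> v <> nil ->
    clause (P (nterm A :: beta) u w) [:: M A alpha; P alpha u v; P beta v w].

(* least Herbrand model with all m-atoms true *)
Inductive provable : atom -> Prop :=
| prov_m A alpha : provable (M A alpha)
| prov_cl H body : clause H body ->
    (forall b, List.In b body -> provable b) -> provable H.

Definition body_ok (body : list atom) : Prop :=
  forall b, List.In b body -> is_p b -> provable b.

Inductive defined : atom -> Prop :=
| def_q : defined (Q l)
| def_step H body b : defined H -> clause H body -> body_ok body ->
    List.In b body -> is_p b -> defined b.

(* H is a parent of C: C occurs in a disjunct of the defining formula of H *)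
Definition parent (H C : atom) : Prop :=
  defined H /\ exists body, clause H body /\ body_ok body /\ List.In C body.

Definition ancestor : atom -> atom -> Prop := clos_trans _ parent.

Definition equiv_goal (A B : atom) : Prop :=
  A = B \/ (ancestor A B /\ ancestor B A).

Definition linear_def (H : atom) : Prop :=
  forall body, clause H body -> body_ok body ->
    ~ (exists i j a b, i <> j /\ nth_error body i = Some a /\
         nth_error body j = Some b /\ defined a /\ defined b /\ equiv_goal a b).

Definition expl_linear : Prop := forall H, defined H -> linear_def H.
End Grammar.

(* A provable atom p(β, u, w) consumes a prefix of u leaving the suffix w, and
   without ε-rules it consumes at least one symbol when β is nonempty.  Along
   the parent relation the input u never grows, so goals of one SCC share the
   length of their input.  The only clause bodies with two p-atoms are those of
   (C3) with v ≠ ε, namely p(α, u, v) and p(β, v, w); as α is nonempty, v is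
   strictly shorter than u, so these two goals lie in different SCCs. *)

From mathcomp Require Import all_boot.
From Stdlib Require Import List Lia.
From mathcomp Require Import zify.

Set Implicit Arguments.

Section ExplanationGraph.
Variables (Sigma Nt : finType) (rules : list (Nt * list (symb Sigma Nt))).
Variables (s : Nt) (l : list Sigma).
Hypothesis no_eps : no_eps_rules rules.

Notation provable := (provable rules s l).
Notation parent := (parent rules s l).
Notation ancestor := (ancestor rules s l).
Notation equiv_goal := (equiv_goal rules s l).

Definition consumes_input (a : atom Sigma Nt) : Prop :=
  if a is P beta u w then
    length w <= length u /\ (beta <> nil -> length w < length u)
  else True.

Lemma provable_consumes_input {a} : provable a -> consumes_input a.
Proof.
elim=> [//|_ body [] {body} /=].
- by [].
- by move=> u _ _; split; [lia | congruence].
- by move=> a' beta _ _; split.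
- move=> a' beta [|x v] w Hv _ IH //=.
  by case: (IH _ (or_introl erefl)) => /=; lia.
- move=> A alpha beta u Hrule _ IH.
  by case: (IH _ (or_intror (or_introl erefl))) => _ /(_ (@no_eps _ _ Hrule)); lia.
- move=> A alpha beta u v w Hrule _ _ IH.
  case: (IH _ (or_intror (or_introl erefl))) => _ /(_ (@no_eps _ _ Hrule)).
  by case: (IH _ (or_intror (or_intror (or_introl erefl)))); lia.
Qed.

Lemma provable_input_shrinks {beta u w} :
  provable (P beta u w) -> beta <> nil -> length w < length u.
Proof. by case/provable_consumes_input. Qed.

Definition input_size (a : atom Sigma Nt) : nat :=
  match a with P _ u _ | Q u => length u | M _ _ => 0 end.

Lemma parent_input_size H C : parent H C -> input_size C <= input_size H.
Proof.
case=> _ [body [Hc [Hok]]]; case: Hc Hok => /=.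
- by move=> _ [<- | []].
- by [].
- by [].
- by move=> a beta [|x v] w Hv _ [<- | []] //=; lia.
- by move=> A alpha beta u _ _ [<- | [<- | []]].
- move=> A alpha beta u v w _ _ Hok [<- | [<- | [<- | []]]] //=.
  by case: (provable_consumes_input (Hok _ (or_intror (or_introl erefl)) I)).
Qed.

Lemma ancestor_input_size H C : ancestor H C -> input_size C <= input_size H.
Proof. by elim=> [? ? /parent_input_size | ? ? ?]; lia. Qed.

Lemma provable_not_equiv_continuation alpha beta u v w :
  provable (P alpha u v) -> alpha <> nil ->
  ~ equiv_goal (P alpha u v) (P beta v w).
Proof.
move=> Hp /(provable_input_shrinks Hp) Hlt.
by case=> [[_ Euv _] | [_ /ancestor_input_size /=]]; [rewrite Euv in Hlt |]; lia.
Qed.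

Lemma equiv_goal_sym a b : equiv_goal a b -> equiv_goal b a.
Proof. by case=> [-> | [? ?]]; [left | right]. Qed.

Lemma clause_body_not_Q {H body} : clause rules s l H body -> ~ List.In (Q Nt l) body.
Proof. by case=> /=; intuition discriminate. Qed.

Lemma defined_in_body_is_p {H body b} :
  clause rules s l H body -> List.In b body -> defined rules s l b -> is_p b.
Proof.
by move=> Hc Hin Db; case: Db Hin => [/(clause_body_not_Q Hc) | ? ? ? _ _ _ _ Hp].
Qed.

Lemma clause_two_p_atoms {H body i j a b} :
  clause rules s l H body -> i <> j ->
  nth_error body i = Some a -> nth_error body j = Some b -> is_p a -> is_p b ->
  exists alpha beta u v w, List.In (P alpha u v) body /\ alpha <> nil /\
    ((a, b) = (P alpha u v, P beta v w) \/ (a, b) = (P beta v w, P alpha u v)).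
Proof.
case=> [|u|a' beta|a' beta v w _|A alpha beta u _|A alpha beta u v w Hrule _];
  case: i => [|[|[|i]]]; case: j => [|[|[|j]]] Hij //=; rewrite ?nth_error_nil //.
all: try by case: Hij.
all: move=> [<-] [<-] // _ _; exists alpha, beta, u, v, w.
all: by split; [right; left | split; [exact: @no_eps _ _ Hrule | tauto]].
Qed.

End ExplanationGraph.

Theorem theorem3 (Sigma Nt : finType) (rules : list (Nt * list (symb Sigma Nt)))
  (s : Nt) (l : list Sigma) :
  no_eps_rules rules -> no_useless rules s -> is_prefix rules s l ->
  expl_linear rules s l.
Proof.
move=> no_eps _ _ H _ body Hc Hok [i [j [a [b [Hij [Ha [Hb [Da [Db Heq]]]]]]]]].
have [alpha [beta [u [v [w [Hin [Halpha Hab]]]]]]] :=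
  clause_two_p_atoms no_eps Hc Hij Ha Hb
    (defined_in_body_is_p Hc (nth_error_In _ _ Ha) Da)
    (defined_in_body_is_p Hc (nth_error_In _ _ Hb) Db).
have Hp := Hok _ Hin I.
case: Hab => -[Ea Eb]; subst a b.
- exact: (provable_not_equiv_continuation no_eps Hp Halpha Heq).
- exact: (provable_not_equiv_continuation no_eps Hp Halpha (equiv_goal_sym Heq)).
Qed.
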